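(* Consider the adaptive sieving procedure described in the context. For each $i\in\{1,\dots,N\}$, the inner loop for $C_i$ terminates after finitely many iterations: there exists an integer $\bar{k}$ with $0\le\bar{k}\le n$ such that $\mathcal{J}^{\bar{k}}(C_i)=\emptyset$. Moreover, the output tuple $(\overline{W}(C_i),\overline{b}(C_i),\overline{v}(C_i),\overline{U}(C_i),\overline{\lambda}(C_i),\overline{\Lambda}(C_i))$ is a KKT tuple of the perturbed full problem $$\min_{W,b,v,U}\ \tfrac12\|W\|_F^2+\tau\|U\|_*+\delta^*_{S^i}(v)-\langle\delta_W,W\rangle-b\delta_b-\langle\delta_v,v\rangle-\langle\delta_U,U\rangle\quad\text{s.t.}\quad \mathcal{A}W+by+v-e_n=\delta_\lambda,\ W-U=\delta_\Lambda$$ for some error $(\delta_W,\delta_b,\delta_v,\delta_U,\delta_\lambda,\delta_\Lambda)$ with $\max(\|\delta_W\|,|\delta_b|,\|\delta_v\|,\|\delta_U\|,\|\delta_\lambda\|,\|\delta_\Lambda\|)\le\varepsilon$; that is, $\delta_W=\overline{W}+\mathcal{A}^*\overline{\lambda}+\overline{\Lambda}$, $\delta_b=y^\top\overline{\lambda}$, $\delta_v-\overline{\lambda}\in\partial\delta^*_{S^i}(\overline{v})$, $\delta_U+\overline{\Lambda}\in\partial(\tau\|\cdot\|_* )(\overline{U})$, $\delta_\lambda=\mathcal{A}\overline{W}+\overline{b}y+\overline{v}-e_n$, $\delta_\Lambda=\overline{W}-\overline{U}$ (all barred quantities evaluated at $C_i$).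
   Context: Data: $X_1,\dots,X_n\in\mathbb{R}^{p\times q}$, $y=(y_1,\dots,y_n)^\top\in\{-1,+1\}^n$, $\tau>0$, $e_n$ the all-ones vector, $\|\cdot\|_*$ the nuclear norm, $\langle X,Y\rangle=\operatorname{tr}(X^\top Y)$. $\mathcal{A}W=(\langle y_1X_1,W\rangle,\dots,\langle y_nX_n,W\rangle)^\top$, $\mathcal{A}^*z=\sum_j z_jy_jX_j$; for $\mathcal{I}\subseteq[n]:=\{1,\dots,n\}$, $\mathcal{A}_{\mathcal{I}}W:=(\mathcal{A}W)_{\mathcal{I}}$, $\mathcal{A}^*_{\mathcal{I}}z:=\sum_{j\in\mathcal{I}}z_jy_jX_j$, and $y_{\mathcal{I}},(e_n)_{\mathcal{I}}$ are subvectors. For grid values $0<C_0<C_1<\dots<C_N$, let $S^i=[0,C_i]^n$, $S^i_{\mathcal{I}}=[0,C_i]^{|\mathcal{I}|}$, and $\delta^*_K$ the support function of $K$. Reduced perturbed problem for $\mathcal{I}$ and $C_i$: minimize $\frac12\|W\|_F^2+\tau\|U\|_*+\delta^*_{S^i_{\mathcal{I}}}(v_{\mathcal{I}})-\langle\delta_W,W\rangle-b\delta_b-\langle\delta_{v_\mathcal{I}},v_{\mathcal{I}}\rangle-\langle\delta_U,U\rangle$ subject to $\mathcal{A}_{\mathcal{I}}W+by_{\mathcal{I}}+v_{\mathcal{I}}-(e_n)_{\mathcal{I}}=\delta_{\lambda_\mathcal{I}}$, $W-U=\delta_\Lambda$. A tuple $(W,b,v_{\mathcal{I}},U,\lambda_{\mathcal{I}},\Lambda)$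 is a KKT tuple of it if $\delta_W=W+\mathcal{A}^*_{\mathcal{I}}\lambda_{\mathcal{I}}+\Lambda$, $\delta_b=y_{\mathcal{I}}^\top\lambda_{\mathcal{I}}$, $\delta_{v_\mathcal{I}}-\lambda_{\mathcal{I}}\in\partial\delta^*_{S^i_{\mathcal{I}}}(v_{\mathcal{I}})$, $\delta_U+\Lambda\in\partial(\tau\|\cdot\|_* )(U)$, $\delta_{\lambda_\mathcal{I}}=\mathcal{A}_{\mathcal{I}}W+by_{\mathcal{I}}+v_{\mathcal{I}}-(e_n)_{\mathcal{I}}$, $\delta_\Lambda=W-U$. Procedure (AS strategy): given an initial $(\overline{W}(C_0),\overline{b}(C_0))$, a tolerance $\varepsilon\ge0$, a scalar $\widehat{\varepsilon}\ge0$ and a positive integer $d_{\max}$, set $\mathcal{I}^*(C_0)=\{j: y_j(\langle\overline{W}(C_0),X_j\rangle+\overline{b}(C_0))\le1+\widehat{\varepsilon}\}$. For $i=1,\dots,N$, set $\mathcal{I}^0(C_i)=\mathcal{I}^*(C_{i-1})$, $k=0$, and repeat: Step 1: find a KKT tuple $(W^k,b^k,v^k_{\mathcal{I}},U^k,\lambda^k_{\mathcal{I}},\Lambda^k)$ of the reduced perturbed problem with $\mathcal{I}=\mathcal{I}^k(C_i)$ for some errors all of norm at most $\varepsilon$. Step 2: with $\overline{\mathcal{I}}^k=[n]\setminus\mathcal{I}^k(C_i)$, set $v^k_j=1-y_j(\langle W^k,X_j\rangle+b^k)$ for $j\in\overline{\mathcal{I}}^k$ and $\mathcal{J}^k(C_i)=\{j\in\overline{\mathcal{I}}^k: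 v^k_j\ge0\}$; extend $v^k_{\mathcal{I}}$ to $v^k\in\mathbb{R}^n$ by these values, and $\lambda^k_{\mathcal{I}}$ to $\lambda^k\in\mathbb{R}^n$ by $\lambda^k_j=-C_i$ for $j\in\mathcal{J}^k(C_i)$ and $\lambda^k_j=0$ for other $j\in\overline{\mathcal{I}}^k$. Step 3: if $\mathcal{J}^k(C_i)=\emptyset$, output $(\overline{W}(C_i),\overline{b}(C_i),\overline{v}(C_i),\overline{U}(C_i),\overline{\lambda}(C_i),\overline{\Lambda}(C_i))=(W^k,b^k,v^k,U^k,\lambda^k,\Lambda^k)$, set $\mathcal{I}^*(C_i)=\{j: y_j(\langle\overline{W}(C_i),X_j\rangle+\overline{b}(C_i))\le1+\widehat{\varepsilon}\}$ and move to $i+1$; otherwise choose a positive integer $d\le\min\{|\mathcal{J}^k(C_i)|,d_{\max}\}$, let $\widehat{\mathcal{J}}^{k+1}(C_i)$ be the indices $j\in\mathcal{J}^k(C_i)$ of the $d$ largest values among $\{v^k_t\}_{t\in\mathcal{J}^k(C_i)}$, set $\mathcal{I}^{k+1}(C_i)=\mathcal{I}^k(C_i)\cup\widehat{\mathcal{J}}^{k+1}(C_i)$, $k\leftarrow k+1$, and return to Step 1. *)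

From HB Require Import structures.
From mathcomp Require Import all_boot all_order all_algebra.
From mathcomp Require Import classical_sets reals.
Set Implicit Arguments.
Unset Strict Implicit.
Unset Printing Implicit Defensive.
Import Order.TTheory GRing.Theory Num.Theory.
Local Open Scope ring_scope.
Local Open Scope classical_set_scope.

Section ASDefs.
Variable R : realType.

Definition minner (p q : nat) (A B : 'M[R]_(p, q)) : R := \tr (A^T *m B).

Definition frob (p q : nat) (A : 'M[R]_(p, q)) : R := Num.sqrt (minner A A).

Definition cvnorm (m : nat) (u : 'cV[R]_m) : R := Num.sqrt (\sum_(i < m) u i 0 ^+ 2).

(* vectors of R^n are functions 'I_n -> R; a sub-vector x_I (I a subset of
   [n]) is represented by the full vector x, of which only the coordinates
   in I are ever used. *)
Definition dotI (n : nat) (I : {set 'I_n}) (u v : 'I_n -> R) : R :=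
  \sum_(j in I) u j * v j.

Definition vnormI (n : nat) (I : {set 'I_n}) (u : 'I_n -> R) : R :=
  Num.sqrt (\sum_(j in I) u j ^+ 2).

Definition boxI (n : nat) (I : {set 'I_n}) (C : R) : set ('I_n -> R) :=
  [set s | forall j, j \in I -> 0 <= s j <= C].

Definition suppI (n : nat) (I : {set 'I_n}) (C : R) (v : 'I_n -> R) : R :=
  sup [set dotI I s v | s in boxI I C].

Definition subdiffI (n : nat) (I : {set 'I_n}) (f : ('I_n -> R) -> R)
  (v : 'I_n -> R) : set ('I_n -> R) :=
  [set g | forall z, f v + dotI I g (fun j => z j - v j) <= f z].

Definition specnorm (p q : nat) (X : 'M[R]_(p, q)) : R :=
  sup [set r | exists (u : 'cV[R]_p) (w : 'cV[R]_q),
         [/\ cvnorm u = 1, cvnorm w = 1 & r = `|(u^T *m X *m w) 0 0|] ].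

(* nuclear norm ||U||_* (sum of singular values), as the dual norm of the
   spectral norm: ||U||_* = sup { <X, U> : ||X||_2 <= 1 } *)
Definition nucnorm (p q : nat) (U : 'M[R]_(p, q)) : R :=
  sup [set minner X U | X in [set X | specnorm X <= 1]].

Definition msubdiff (p q : nat) (f : 'M[R]_(p, q) -> R) (U : 'M[R]_(p, q))
  : set 'M[R]_(p, q) :=
  [set G | forall Z, f U + minner G (Z - U) <= f Z].

Record ktuple (n p q : nat) := mkTuple {
  tW : 'M[R]_(p, q);
  tb : R;
  tv : 'I_n -> R;
  tU : 'M[R]_(p, q);
  tlam : 'I_n -> R;
  tLam : 'M[R]_(p, q) }.

Section Problem.
Variables (n p q : nat) (X : 'I_n -> 'M[R]_(p, q)) (y : 'I_n -> R) (tau : R).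

Definition Aop (W : 'M[R]_(p, q)) (j : 'I_n) : R := minner (y j *: X j) W.

Definition AstarI (I : {set 'I_n}) (z : 'I_n -> R) : 'M[R]_(p, q) :=
  \sum_(j in I) (z j * y j) *: X j.

Definition KKT_red (I : {set 'I_n}) (C : R) (t e : ktuple n p q) : Prop :=
  [/\ tW e = tW t + AstarI I (tlam t) + tLam t,
      tb e = \sum_(j in I) y j * tlam t j,
      subdiffI I (suppI I C) (tv t) (fun j => tv e j - tlam t j),
      msubdiff (fun Z => tau * nucnorm Z) (tU t) (tU e + tLam t)
    & (forall j, j \in I ->
         tlam e j = Aop (tW t) j + tb t * y j + tv t j - 1)
      /\ tLam e = tW t - tU t].

Definition errs_le (I : {set 'I_n}) (eps : R) (e : ktuple n p q) : Prop :=
  [/\ frob (tW e) <= eps, `|tb e| <= eps, vnormI I (tv e) <= eps,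
      frob (tU e) <= eps & vnormI I (tlam e) <= eps /\ frob (tLam e) <= eps].

Definition KKT_full (C : R) (t e : ktuple n p q) : Prop :=
  KKT_red [set: 'I_n] C t e.
Definition errs_full_le (eps : R) (e : ktuple n p q) : Prop :=
  errs_le [set: 'I_n] eps e.

Definition vext (I : {set 'I_n}) (t : ktuple n p q) (j : 'I_n) : R :=
  if j \in I then tv t j else 1 - y j * (minner (tW t) (X j) + tb t).

Definition Jset (I : {set 'I_n}) (t : ktuple n p q) : {set 'I_n} :=
  [set j | (j \notin I) && (0 <= vext I t j)].

Definition lamext (I : {set 'I_n}) (C : R) (t : ktuple n p q) (j : 'I_n) : R :=
  if j \in I then tlam t j else if j \in Jset I t then - C else 0.

Definition extend (I : {set 'I_n}) (C : R) (t : ktuple n p q) : ktuple n p q :=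
  mkTuple (tW t) (tb t) (vext I t) (tU t) (lamext I C t) (tLam t).

Definition top_d (J Jh : {set 'I_n}) (v : 'I_n -> R) (d : nat) : Prop :=
  [/\ Jh \subset J, #|Jh| = d &
      forall j t, j \in Jh -> t \in J :\: Jh -> v t <= v j].

Definition Istar (epshat : R) (W : 'M[R]_(p, q)) (b : R) : {set 'I_n} :=
  [set j | y j * (minner W (X j) + b) <= 1 + epshat].

(* A run of the AS strategy on the grid C_0 < ... < C_N:
   Iseq i k = I^k(C_i), T i k = the KKT tuple of Step 1 (its v and lambda
   components only matter on I^k(C_i)), outW i / outb i = W-bar(C_i),
   b-bar(C_i) (outW 0, outb 0 = the given initial point). *)
Definition AS_run (N : nat) (C : nat -> R) (eps epshat : R) (dmax : nat)
  (W0 : 'M[R]_(p, q)) (b0 : R)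
  (Iseq : nat -> nat -> {set 'I_n}) (T : nat -> nat -> ktuple n p q)
  (outW : nat -> 'M[R]_(p, q)) (outb : nat -> R) : Prop :=
  [/\ outW 0 = W0 /\ outb 0 = b0,
      (forall i, (1 <= i <= N)%N ->
         Iseq i 0%N = Istar epshat (outW i.-1) (outb i.-1)),
      (forall i k, (1 <= i <= N)%N ->
         (forall k', (k' < k)%N -> Jset (Iseq i k') (T i k') != finset.set0) ->
         exists e, errs_le (Iseq i k) eps e /\ KKT_red (Iseq i k) (C i) (T i k) e),
      (forall i k, (1 <= i <= N)%N ->
         (forall k', (k' <= k)%N -> Jset (Iseq i k') (T i k') != finset.set0) ->
         exists (d : nat) (Jh : {set 'I_n}),
           [/\ (0 < d)%N, (d <= minn #|Jset (Iseq i k) (T i k)| dmax)%N,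
               top_d (Jset (Iseq i k) (T i k)) Jh (vext (Iseq i k) (T i k)) d
             & Iseq i k.+1 = Iseq i k :|: Jh])
    &
      (forall i k, (1 <= i <= N)%N ->
         (forall k', (k' < k)%N -> Jset (Iseq i k') (T i k') != finset.set0) ->
         Jset (Iseq i k) (T i k) = finset.set0 ->
         outW i = tW (T i k) /\ outb i = tb (T i k))].

End Problem.
End ASDefs.

From HB Require Import structures.
From mathcomp Require Import boolp classical_sets reals.
From mathcomp Require Import all_boot all_order all_algebra.
From mathcomp Require Import ring.
Set Implicit Arguments.
Unset Strict Implicit.
Unset Printing Implicit Defensive.
Import Order.TTheory GRing.Theory Num.Theory.
Local Open Scope ring_scope.

(* Each pass of the inner loop adds at least one index of [n] that is not yet
   in the working set, so the loop stops after at most n passes.  When it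
   stops, every discarded index j has v_j < 0, i.e. a strictly satisfied
   margin, so lambda_j = 0 there, and padding the errors of the reduced
   problem by zeros gives a KKT tuple of the full problem.  The only
   nontrivial condition is the subgradient inclusion for the support function
   of the box: the support function of [0,C]^n grows with the index set, and
   at a point that is negative off I it coincides with that of [0,C]^I. *)

Section SupportFunction.
Variables (R : realType) (n : nat).
Implicit Types (I : {set 'I_n}) (C : R) (u v w g : 'I_n -> R).

Definition zext I u (j : 'I_n) : R := if j \in I then u j else 0.

Lemma sum_zext (V : nmodType) I u (F : 'I_n -> R -> V) :
  (forall j, F j 0 = 0) ->
  \sum_(j in [set: 'I_n]) F j (zext I u j) = \sum_(j in I) F j (u j).
Proof.
move=> F0; rewrite big_mkcond [RHS]big_mkcond; apply: eq_bigr => j _.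
by rewrite in_setT /zext; case: ifP.
Qed.

Lemma dotI_zext I u v : dotI [set: 'I_n] (zext I u) v = dotI I u v.
Proof.
by rewrite /dotI (sum_zext _ _ (F := fun j x => x * v j)) // => j; rewrite mul0r.
Qed.

Lemma vnormI_zext I u : vnormI [set: 'I_n] (zext I u) = vnormI I u.
Proof.
by rewrite /vnormI (sum_zext _ _ (F := fun _ x => x ^+ 2)) // => j; rewrite expr0n.
Qed.

Lemma boxI0 I C : 0 <= C -> boxI I C (fun=> 0).
Proof. by move=> C0 j _; rewrite lexx C0. Qed.

Lemma dotI_boxI_neq0 I C v : 0 <= C ->
  ([set dotI I s v | s in boxI I C] !=set0)%classic.
Proof. by move=> C0; exists (dotI I (fun=> 0) v), (fun=> 0) => //; apply: boxI0. Qed.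

Lemma has_sup_dotI_boxI I C v : 0 <= C ->
  has_sup [set dotI I s v | s in boxI I C]%classic.
Proof.
move=> C0; split; first exact: dotI_boxI_neq0.
exists (\sum_(j in I) C * `|v j|) => _ [s Hs <-].
apply: ler_sum => j jI; have /andP[s0 sC] := Hs j jI.
apply: le_trans (ler_norm _) _; rewrite normrM (ger0_norm s0).
exact: ler_wpM2r.
Qed.

Lemma eq_suppI I C u v : {in I, u =1 v} -> suppI I C u = suppI I C v.
Proof.
move=> uv; rewrite /suppI; congr sup; rewrite funeqE => r; rewrite propeqE.
by split=> -[s Hs <-]; exists s => //; apply: eq_bigr => j /uv ->.
Qed.

Lemma suppI_le_setT I C v : 0 <= C -> suppI I C v <= suppI [set: 'I_n] C v.
Proof.
move=> C0; apply: ge_sup; first exact: dotI_boxI_neq0.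
move=> _ [s Hs <-]; rewrite -dotI_zext.
apply: sup_upper_bound; first exact: has_sup_dotI_boxI.
exists (zext I s) => // j _; rewrite /zext; case: ifP => jI; first exact: Hs.
by rewrite lexx C0.
Qed.

Lemma suppI_setT_le I C v : 0 <= C -> (forall j, j \notin I -> v j < 0) ->
  suppI [set: 'I_n] C v <= suppI I C v.
Proof.
move=> C0 vneg; apply: ge_sup; first exact: dotI_boxI_neq0.
move=> _ [s Hs <-]; apply: le_trans (sup_upper_bound _ _); first last.
- by exists s => // j _; apply: Hs; rewrite in_setT.
- exact: has_sup_dotI_boxI.
rewrite /dotI (big_setID I) /= setTI setTD gerDl.
apply: sumr_le0 => j; rewrite inE => jI.
have /andP[s0 _] := Hs j (in_setT j).
by rewrite mulr_ge0_le0 // ltW // vneg.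
Qed.

Lemma subdiffI_suppI_setT I C v w g : 0 <= C ->
  {in I, v =1 w} -> (forall j, j \notin I -> w j < 0) ->
  subdiffI I (suppI I C) v g ->
  subdiffI [set: 'I_n] (suppI [set: 'I_n] C) w (zext I g).
Proof.
move=> C0 vw wneg sub z; rewrite dotI_zext.
have -> : dotI I g (fun j => z j - w j) = dotI I g (fun j => z j - v j).
  by apply: eq_bigr => j /vw ->.
apply: le_trans (suppI_le_setT _ _ C0); apply: le_trans (sub z).
rewrite lerD2r (eq_suppI _ vw); exact: suppI_setT_le.
Qed.

End SupportFunction.

Lemma minnerC (R : realType) p q (A B : 'M[R]_(p, q)) : minner A B = minner B A.
Proof. by rewrite /minner -mxtrace_tr trmx_mul trmxK. Qed.

Lemma minnerZl (R : realType) p q (a : R) (A B : 'M[R]_(p, q)) :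
  minner (a *: A) B = a * minner A B.
Proof. by rewrite /minner linearZ /= -scalemxAl mxtraceZ. Qed.

Section KKTExtension.
Variables (R : realType) (n p q : nat) (X : 'I_n -> 'M[R]_(p, q)) (y : 'I_n -> R).
Variable tau : R.
Implicit Types (I : {set 'I_n}) (C eps : R) (t e : ktuple R n p q).

Definition zext_err I e : ktuple R n p q :=
  mkTuple (tW e) (tb e) (zext I (tv e)) (tU e) (zext I (tlam e)) (tLam e).

Lemma errs_full_le_zext I eps e :
  errs_le I eps e -> errs_full_le eps (zext_err I e).
Proof. by case=> *; split; rewrite //= vnormI_zext. Qed.

Lemma AopE W j : Aop X y W j = y j * minner W (X j).
Proof. by rewrite /Aop minnerZl minnerC. Qed.

Lemma vext_lt0 I t j : Jset X y I t = set0 -> j \notin I -> vext X y I t j < 0.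
Proof.
move=> J0 jI; have : j \notin Jset X y I t by rewrite J0 inE.
by rewrite inE jI ltNge.
Qed.

Lemma lamext_Jset0 I C t : Jset X y I t = set0 ->
  lamext X y I C t = zext I (tlam t).
Proof.
by move=> J0; apply/funext => j; rewrite /lamext /zext J0 inE; case: ifP.
Qed.

Lemma KKT_full_extend I C t e : 0 <= C -> Jset X y I t = set0 ->
  KKT_red X y tau I C t e ->
  KKT_full X y tau C (extend X y I C t) (zext_err I e).
Proof.
move=> C0 J0 [eW eb ev eU [elam eLam]].
have lamE := lamext_Jset0 C J0.
split=> //=; rewrite ?lamE.
- by rewrite eW /AstarI (sum_zext _ _ (F := fun j x => (x * y j) *: X j)) // => j;
    rewrite mul0r scale0r.
- by rewrite eb (sum_zext _ _ (F := fun j x => y j * x)) // => j; rewrite mulr0.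
- have -> : (fun j => zext I (tv e) j - zext I (tlam t) j) =
            zext I (fun j => tv e j - tlam t j).
    by apply/funext => j; rewrite /zext; case: ifP; rewrite ?subr0.
  apply: subdiffI_suppI_setT ev => // [j jI|j]; last exact: vext_lt0.
  by rewrite /vext jI.
- split=> // j _; rewrite /zext /vext; case: ifP => jI; first exact: elam.
  by rewrite AopE; ring.
Qed.

Lemma card_AS_step I t (Jh : {set 'I_n}) :
  Jh \subset Jset X y I t -> (0 < #|Jh|)%N -> (#|I| < #|I :|: Jh|)%N.
Proof.
move=> sub Jh0.
have disj : [disjoint I & Jh].
  rewrite disjoint_sym disjoints_subset; apply: subset_trans sub _.
  by apply/subsetP => j; rewrite !inE => /andP[].
have /eqP -> : #|I :|: Jh| == (#|I| + #|Jh|)%N by rewrite (leq_card_setU I Jh).2.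
by rewrite -[X in (X < _)%N]addn0 ltn_add2l.
Qed.

End KKTExtension.

Lemma card_increasing_stops n (I : nat -> {set 'I_n}) (P : pred nat) :
  (forall k, (forall k', (k' <= k)%N -> ~~ P k') -> (#|I k| < #|I k.+1|)%N) ->
  exists m, [/\ (m <= n)%N, forall k, (k < m)%N -> ~~ P k & P m].
Proof.
move=> grow.
have card_ge k : (forall k', (k' < k)%N -> ~~ P k') -> (k <= #|I k|)%N.
  elim: k => // k IH running; apply: leq_ltn_trans (grow k running).
  by apply: IH => k' lt; apply: running; apply: ltnW.
have card_le k : (#|I k| <= n)%N by rewrite -[X in (_ <= X)%N]card_ord max_card.
have [k0 Pk0] : exists k, P k.
  apply: contrapT => noP.
  have never k : ~~ P k by apply/negP => Pk; apply: noP; exists k.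
  by have := leq_trans (card_ge n.+1 (fun k _ => never k)) (card_le _); rewrite ltnn.
have [m Pm minm] := ex_minnP (ex_intro P k0 Pk0).
have before k : (k < m)%N -> ~~ P k.
  by move=> lt; apply/negP => /minm; rewrite leqNgt lt.
by exists m; split=> //; apply: leq_trans (card_ge m before) (card_le m).
Qed.

Lemma increasing_grid_gt0 (R : realType) (N : nat) (C : nat -> R) :
  0 < C 0%N -> (forall i, (i < N)%N -> C i < C i.+1) ->
  forall i, (i <= N)%N -> 0 < C i.
Proof.
by move=> C0 Cinc; elim=> // i IH iN; apply: lt_trans (IH (ltnW iN)) (Cinc i iN).
Qed.

Theorem theorem3 (R : realType) (n p q : nat) (X : 'I_n -> 'M[R]_(p, q))
  (y : 'I_n -> R) (tau : R) (N : nat) (C : nat -> R) (eps epshat : R)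
  (dmax : nat) (W0 : 'M[R]_(p, q)) (b0 : R)
  (Iseq : nat -> nat -> {set 'I_n}) (T : nat -> nat -> ktuple R n p q)
  (outW : nat -> 'M[R]_(p, q)) (outb : nat -> R) :
  (forall j, y j = 1 \/ y j = -1) ->
  0 < tau ->
  0 < C 0%N ->
  (forall i, (i < N)%N -> C i < C i.+1) ->
  0 <= eps -> 0 <= epshat -> (0 < dmax)%N ->
  AS_run X y tau N C eps epshat dmax W0 b0 Iseq T outW outb ->
  forall i, (1 <= i <= N)%N ->
  exists kbar : nat,
    [/\ (kbar <= n)%N,
        (forall k, (k < kbar)%N -> Jset X y (Iseq i k) (T i k) != finset.set0),
        Jset X y (Iseq i kbar) (T i kbar) = finset.set0
      & exists e : ktuple R n p q,
          errs_full_le eps e /\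
          KKT_full X y tau (C i) (extend X y (Iseq i kbar) (C i) (T i kbar)) e].
Proof.
move=> _ _ C0 Cinc _ _ _ [_ _ step1 step3 _] i iN.
have Ci0 : 0 <= C i by apply/ltW/(increasing_grid_gt0 C0 Cinc); case/andP: iN.
have [|m [mn before /eqP Jm]] :=
  @card_increasing_stops n (Iseq i) (fun k => Jset X y (Iseq i k) (T i k) == set0).
  move=> k notJ0; have [d [Jh [d0 _ [sub cardJh _] ->]]] := step3 i k iN notJ0.
  by apply: card_AS_step sub _; rewrite cardJh.
exists m; split=> //.
have [e [errs kkt]] := step1 i m iN before.
exists (zext_err (Iseq i m) e).
by split; [exact: errs_full_le_zext | exact: KKT_full_extend].
Qed.
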